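(* For every symmetric instance with $n$ actions and $k$ signals ($2\le k\le n$) there exist a slope $s\in[-\infty,0]$ and an optimal scheme with $k$ signals that is direct, persuasive, recommends only actions in $[k]$, and whose recommendation points form an $s$-Pareto point collection $\mathcal P$ satisfying $u_{\mathcal S}(\mathcal P)\ge u_{\mathcal S}(\mathcal P')$ for every $s'\in[-\infty,0]$ and every $s'$-Pareto point collection $\mathcal P'$.
   Context: Model: a receiver chooses one of the actions $[n]$; each action $i$ has a type $\theta_i$; the state $\boldsymbol\theta=(\theta_1,\dots,\theta_n)$ is drawn from a commonly known distribution $q$ over a finite set of type vectors. Each type $t$ has receiver value $\rho(t)$ and sender value $\xi(t)$, received if the receiver takes an action of that type. A signaling scheme with $k$ signals maps each state to a distribution over $k$ signals; the sender commits to it, observes the state and sends a signal; the receiver picks an action maximizing her conditional expected utility given the signal, breaking ties in favor of the sender. $u_{\mathcal S},u_{\mathcal R}$ denote expected utilities; optimal means maximizing $u_{\mathcal S}$ among schemes with $k$ signals. Direct: each signal recommends an action; persuasive: for each signal sent with positive probability recommending $i$, $\mathbb E[\rho(\theta_i)\mid\sigma]\ge\mathbb E[\rho(\theta_j)\mid\sigma]$ for all $j$. $\rho_E=\max_{i\in[n]}\sum_{\boldsymbol\theta}q_{\boldsymbol\theta}\rho(\theta_i)$. Symmetric instance: $q_{\boldsymbol\theta}=q_{\boldsymbol\theta'}$ whenever $\boldsymbol\theta'$ is a permutation of $\boldsymbol\theta$; all actions share the type set $\Theta$, and (w.l.o.g.) the types in any state are pairwise distinct. Identify each type $c$ with the point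 $(\rho(c),\xi(c))\in\mathbb R^2$. For a $k$-element set $C$ of types let $q_C=\Pr[\{\theta_1,\dots,\theta_k\}=C]$. For $s\in(-\infty,0]$, a point $p$ of the convex hull $\mathrm{conv}(C)$ corresponds to slope $s$ if it maximizes $y-sx$ over $(x,y)\in\mathrm{conv}(C)$; it corresponds to slope $-\infty$ if it maximizes $x$ (first coordinate) over $\mathrm{conv}(C)$. The Pareto frontier of $C$ is the set of points of $\mathrm{conv}(C)$ corresponding to some slope in $[-\infty,0]$. A point collection $\mathcal P$ assigns to each $C$ with $q_C>0$ a point $p(C)=(p_{\mathcal R}(C),p_{\mathcal S}(C))\in\mathrm{conv}(C)$; $u_{\mathcal S}(\mathcal P)=\sum_C q_Cp_{\mathcal S}(C)$ and $u_{\mathcal R}(\mathcal P)=\sum_Cq_Cp_{\mathcal R}(C)$. For $s\in[-\infty,0]$, $\mathcal P$ is $s$-Pareto if (1) for every $C$, $p(C)$ corresponds to slope $s$ (in particular lies on the Pareto frontier of $C$), and (2) $u_{\mathcal R}(\mathcal P)\ge\rho_E$. For a direct scheme recommending only actions in $[k]$, its recommendation point for $C$ is $(\mathbb E[\rho(\theta_\sigma)\mid \{\theta_1,\dots,\theta_k\}=C],\ \mathbb E[\xi(\theta_\sigma)\mid\{\theta_1,\dots,\theta_k\}=C])$, where $\sigma$ is the recommended action; these points form a point collection. *)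

From HB Require Import structures.
From mathcomp Require Import all_boot all_order all_algebra all_fingroup.
From mathcomp Require Import reals.
Set Implicit Arguments. Unset Strict Implicit. Unset Printing Implicit Defensive.
Import Order.TTheory GRing.Theory Num.Theory.
Local Open Scope ring_scope.

Section Persuasion.
Variables (R : realType) (T : finType) (n k : nat).
Variables (rho xi : T -> R).

(* a state is a type vector (theta_1, ..., theta_n) *)
Notation state := {ffun 'I_n -> T}.
Variable q : state -> R.

Definition is_distribution := (forall th, 0 <= q th) /\ \sum_th q th = 1.

Definition symmetric_q :=
  forall (th : state) (pi : {perm 'I_n}), q [ffun i => th (pi i)] = q th.

Definition distinct_types := forall th : state, 0 < q th -> injective th.

(* a signaling scheme with k signals: phi th sg = Pr[signal sg | state th] *)
Definition is_scheme (phi : state -> 'I_k -> R) :=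
  forall th, (forall sg, 0 <= phi th sg) /\ \sum_sg phi th sg = 1.

Definition Psig (phi : state -> 'I_k -> R) (sg : 'I_k) := \sum_th q th * phi th sg.

Definition condE (phi : state -> 'I_k -> R) (sg : 'I_k) (f : state -> R) :=
  (\sum_th q th * phi th sg * f th) / Psig phi sg.

Definition receiver_best (phi : state -> 'I_k -> R) (a : 'I_k -> 'I_n) :=
  forall sg,
    (forall j, condE phi sg (fun th => rho (th j)) <= condE phi sg (fun th => rho (th (a sg))))
    /\ (forall j, (forall l, condE phi sg (fun th => rho (th l))
                             <= condE phi sg (fun th => rho (th j))) ->
         condE phi sg (fun th => xi (th j)) <= condE phi sg (fun th => xi (th (a sg)))).

Definition uS_scheme (phi : state -> 'I_k -> R) (a : 'I_k -> 'I_n) :=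
  \sum_sg Psig phi sg * condE phi sg (fun th => xi (th (a sg))).

Definition optimal_scheme (phi : state -> 'I_k -> R) :=
  is_scheme phi /\
  exists a, receiver_best phi a /\
    forall phi' a', is_scheme phi' -> receiver_best phi' a' ->
      uS_scheme phi' a' <= uS_scheme phi a.

(* direct scheme: signal sg recommends action rec sg; persuasive *)
Definition persuasive (phi : state -> 'I_k -> R) (rec : 'I_k -> 'I_n) :=
  forall sg, 0 < Psig phi sg -> forall j,
    condE phi sg (fun th => rho (th j)) <= condE phi sg (fun th => rho (th (rec sg))).

(* rho_E bound: u_R >= max_i E[rho(theta_i)], written as >= every E[rho(theta_i)] *)
Definition ge_rhoE (x : R) := forall i : 'I_n, \sum_th q th * rho (th i) <= x.

Definition firstk (th : state) : {set T} := [set th i | i : 'I_n & (i < k)%N].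

Definition qC (C : {set T}) := \sum_(th | firstk th == C) q th.

Definition in_conv (C : {set T}) (p : R * R) :=
  exists lam : T -> R, (forall c, 0 <= lam c) /\ (forall c, c \notin C -> lam c = 0)
    /\ \sum_c lam c = 1
    /\ p = (\sum_c lam c * rho c, \sum_c lam c * xi c).

(* slopes in [-oo, 0]: None = -oo, Some s with s <= 0 *)
Definition slope_ok (s : option R) : Prop := if s is Some s0 then s0 <= 0 else True.

Definition slope_obj (s : option R) (p : R * R) :=
  if s is Some s0 then p.2 - s0 * p.1 else p.1.

Definition corresponds (C : {set T}) (s : option R) (p : R * R) :=
  in_conv C p /\ forall z, in_conv C z -> slope_obj s z <= slope_obj s p.

(* point collections: P C meaningful for qC C > 0 *)
Definition uS_pc (P : {set T} -> R * R) := \sum_(C | 0 < qC C) qC C * (P C).2.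
Definition uR_pc (P : {set T} -> R * R) := \sum_(C | 0 < qC C) qC C * (P C).1.

Definition point_collection (P : {set T} -> R * R) :=
  forall C, 0 < qC C -> in_conv C (P C).

Definition s_pareto (s : option R) (P : {set T} -> R * R) :=
  point_collection P /\
  (forall C, 0 < qC C -> corresponds C s (P C)) /\ ge_rhoE (uR_pc P).

Definition rec_points (phi : state -> 'I_k -> R) (rec : 'I_k -> 'I_n) (C : {set T}) : R * R :=
  ((\sum_(th | firstk th == C) \sum_sg q th * phi th sg * rho (th (rec sg))) / qC C,
   (\sum_(th | firstk th == C) \sum_sg q th * phi th sg * xi (th (rec sg))) / qC C).

End Persuasion.

(* The proof is by Lagrangian duality.  For a multiplier l >= 0 (slope s = -l)
   put lagr l c = xi c + l * rho c.  The face of conv(C) maximising lagr l has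
   a receiver-worst endpoint lo l C and a receiver-best endpoint hi l C.
   - Multiplier: scanning the finitely many breakpoints where the ordering by
     lagr changes, we find l >= 0 and t in [0, 1] such that recommending hi
     with probability t and lo otherwise gives the receiver at least rho_E,
     with equality when l > 0 (complementary slackness).
   - Scheme: in state th recommend that endpoint of C = {theta_1..theta_k}, by
     the signal whose action carries it; the recommendation points are the
     mixtures of the two endpoints, hence (-l)-Pareto.
   - Persuasiveness comes from symmetry: swapping two of the first k actions
     swaps the corresponding signals, so all recommendations carry the same
     mass, and comparing with rho_E shows that following is a best response.
   - Weak duality: for every scheme (its chosen actions are moved into [k] by
     a permutation, using symmetry) and every Pareto point collection the sender
     gets at most E[max_C lagr l] - l * rho_E, which the scheme attains. *)

From HB Require Import structures.
From mathcomp Require Import all_boot all_order all_algebra all_fingroup.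
From mathcomp Require Import alt primitive_action.
From mathcomp Require Import reals.
From mathcomp Require Import ring lra.
Import Order.TTheory GRing.Theory Num.Theory.
Local Open Scope ring_scope.

Lemma exists_argmax (R : realDomainType) (K : finType) (P : pred K) (f : K -> R) (x0 : K) :
  P x0 -> exists c, P c /\ forall d, P d -> f d <= f c.
Proof. by move=> Px0; case: (arg_maxP f Px0) => c Pc cmax; exists c. Qed.
Arguments exists_argmax {R K P} f {x0}.

Lemma exists_argmin (R : realDomainType) (K : finType) (P : pred K) (f : K -> R) (x0 : K) :
  P x0 -> exists c, P c /\ forall d, P d -> f c <= f d.
Proof.
move=> /(exists_argmax (fun x => - f x)) [c [Pc cmax]].
by exists c; split=> // d Pd; rewrite -lerN2 cmax.
Qed.
Arguments exists_argmin {R K P} f {x0}.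

Lemma convex_interpolation (R : realFieldType) (a b e : R) : a <= e -> e <= b ->
  exists t, [/\ 0 <= t, t <= 1 & (1 - t) * a + t * b = e].
Proof.
move=> ae eb; have [ab|ab] := eqVneq a b.
  exists 1; split=> //; rewrite subrr mul0r add0r mul1r.
  by apply/eqP; rewrite eq_le eb -ab ae.
have ba_gt0 : 0 < b - a by rewrite subr_gt0 lt_neqAle ab (le_trans ae eb).
exists ((e - a) / (b - a)); split.
- by apply: divr_ge0; [rewrite subr_ge0 | exact: ltW].
- by rewrite ler_pdivrMr // mul1r lerD2r.
- have -> : (1 - (e - a) / (b - a)) * a + (e - a) / (b - a) * b
           = a + (e - a) / (b - a) * (b - a) by ring.
  by rewrite divfK ?gt_eqF //; ring.
Qed.
Arguments convex_interpolation {R a b e}.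

Lemma sum_delta (R : pzSemiRingType) (I : finType) (a : I) (F : I -> R) :
  \sum_i (i == a)%:R * F i = F a.
Proof.
rewrite (bigD1 a) //= eqxx mul1r big1 ?addr0 // => i /negbTE ->.
by rewrite mul0r.
Qed.

Definition two_point (R : pzRingType) (I : finType) (t : R) (a b : I) (i : I) : R :=
  (1 - t) * (i == a)%:R + t * (i == b)%:R.
Arguments two_point {R I}.

Lemma sum_two_point (R : comPzRingType) (I : finType) (t : R) (a b : I) (F : I -> R) :
  \sum_i two_point t a b i * F i = (1 - t) * F a + t * F b.
Proof.
rewrite /two_point; under eq_bigr do rewrite mulrDl -!mulrA.
by rewrite big_split /= -!big_distrr /= !sum_delta.
Qed.

Lemma two_point_ge0 (R : numDomainType) (I : finType) (t : R) (a b : I) i :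
  0 <= t -> t <= 1 -> 0 <= two_point t a b i.
Proof. by move=> t_ge0 t_le1; rewrite addr_ge0 ?mulr_ge0 ?subr_ge0. Qed.

(* Any set of at most k positions of 'I_n is moved into the prefix [0, k) by
   some permutation; this uses the #|A|-transitivity of the symmetric group. *)
Lemma perm_into_prefix n k (A : {set 'I_n}) : (#|A| <= k)%N ->
  exists p : {perm 'I_n}, forall x, x \in A -> (p x < k)%N.
Proof.
move=> Ak; set m := #|A|.
have mn : (m <= n)%N by rewrite -[n in (_ <= n)%N]card_ord max_card.
have trm : [transitive^m 'Sym_('I_n), on setT | 'P].
  by apply: ntransitive_weak (Sym_trans _); rewrite card_ord.
pose tA : m.-tuple 'I_n := [tuple of enum A].
pose tP : m.-tuple 'I_n := [tuple widen_ord mn i | i < m].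
have dtuple_of (t : m.-tuple 'I_n) : uniq t -> t \in m.-dtuple(setT).
  by move=> ut; rewrite inE ut; apply/subsetP => x; rewrite inE.
have [|p _ ptA] := atransP2 trm (dtuple_of tA (enum_uniq _)) (dtuple_of tP _).
  by rewrite /= map_inj_uniq ?enum_uniq // => i j [] /val_inj.
exists p => x xA.
have : p x \in tP by rewrite ptA /= map_f // mem_enum.
by case/mapP=> i _ ->; rewrite /= (leq_trans (ltn_ord i)).
Qed.

Section SymmetricInstance.
Variables (R : realType) (T : finType) (n k : nat) (rho xi : T -> R).
Variable q : {ffun 'I_n -> T} -> R.
Hypotheses (k_ge2 : (2 <= k)%N) (k_le_n : (k <= n)%N).
Hypotheses (q_distr : is_distribution q) (q_sym : symmetric_q q).
Hypothesis q_distinct : distinct_types q.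
(* A default type, only needed to make choice functions total. *)
Variable t0 : T.

Local Notation state := {ffun 'I_n -> T}.

Lemma q_ge0 (th : state) : 0 <= q th. Proof. by case: q_distr. Qed.

Lemma q_pos_or0 (th : state) : q th = 0 \/ 0 < q th.
Proof. by have := q_ge0 th; rewrite le_eqVlt => /orP[/eqP<-|]; [left|right]. Qed.

Lemma k_gt0 : (0 < k)%N. Proof. exact: leq_trans k_ge2. Qed.

Definition rec (i : 'I_k) : 'I_n := widen_ord k_le_n i.
Definition sig0 : 'I_k := Ordinal k_gt0.
Definition act0 : 'I_n := rec sig0.

Lemma rec_inj : injective rec.
Proof. by move=> a b [] /val_inj. Qed.

(* Relabelling the actions of a state by a permutation; by symmetry of q
   this is a measure-preserving bijection of the state space. *)
Definition relabel (s : {perm 'I_n}) (th : state) : state := [ffun i => th (s i)].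

Lemma q_relabel (s : {perm 'I_n}) (th : state) : q (relabel s th) = q th.
Proof. exact: q_sym. Qed.

Lemma relabel_inj (s : {perm 'I_n}) : injective (relabel s).
Proof.
move=> th1 th2 /ffunP eq12; apply/ffunP => i; have := eq12 (s^-1 i)%g.
by rewrite !ffunE permKV.
Qed.

Lemma sum_relabel (s : {perm 'I_n}) (F : state -> R) : \sum_th F th = \sum_th F (relabel s th).
Proof. exact: reindex_inj (@relabel_inj s). Qed.

Lemma firstk_relabel (s : {perm 'I_n}) (th : state) : (forall i, (s i < k)%N = (i < k)%N) ->
  firstk k (relabel s th) = firstk k th.
Proof.
move=> s_k; apply/setP => c; apply/imsetP/imsetP => [[i Hi ->]|[i Hi ->]].
  by exists (s i); rewrite ?ffunE // inE s_k; rewrite inE in Hi.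
exists (s^-1 i)%g; last by rewrite ffunE permKV.
by rewrite inE -s_k permKV; rewrite inE in Hi.
Qed.

(* The prior expectation of rho of a fixed action does not depend on the action;
   this common value is rho_E. *)
Definition E_rho := \sum_th q th * rho (th act0).

Lemma E_rho_any (j : 'I_n) : \sum_th q th * rho (th j) = E_rho.
Proof.
rewrite (sum_relabel (tperm j act0)) /E_rho; apply: eq_bigr => th _.
by rewrite q_relabel ffunE tpermL.
Qed.

Lemma firstk_rec (th : state) (i : 'I_k) : th (rec i) \in firstk k th.
Proof. by apply/imsetP; exists (rec i) => //; rewrite inE /= ltn_ord. Qed.

Lemma firstk_recP (th : state) (c : T) : c \in firstk k th -> exists i : 'I_k, th (rec i) = c.
Proof.
case/imsetP=> i; rewrite inE /= => Hi ->.
by exists (Ordinal Hi); congr (th _); apply: val_inj.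
Qed.

Lemma qC_ge0 (C : {set T}) : 0 <= qC k q C.
Proof. by apply: sumr_ge0 => th _; exact: q_ge0. Qed.

Lemma sum_by_firstk (F : {set T} -> R) :
  \sum_(C | 0 < qC k q C) qC k q C * F C = \sum_th q th * F (firstk k th).
Proof.
rewrite (partition_big (firstk k) predT) //= [RHS](bigID (fun C => 0 < qC k q C)) /=.
have fibre C : \sum_(th | firstk k th == C) q th * F (firstk k th) = qC k q C * F C.
  by rewrite /qC big_distrl /=; apply: eq_bigr => th /eqP ->.
rewrite [X in _ = _ + X]big1 => [|C]; last first.
  rewrite fibre ltNge negbK => qC_le0.
  have -> : qC k q C = 0 by apply/eqP; rewrite eq_le qC_ge0 qC_le0.
  by rewrite mul0r.
by rewrite addr0; apply: eq_bigr => C _; rewrite fibre.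
Qed.

Lemma qC_pos_firstk (C : {set T}) : 0 < qC k q C -> exists th : state, firstk k th = C.
Proof.
rewrite /qC; case: (pickP (fun th : state => firstk k th == C)) => [th /eqP <-|none].
  by exists th.
by rewrite big_pred0 // ltxx.
Qed.
Arguments qC_pos_firstk {C}.

(* The Lagrangian of a type for multiplier l >= 0 (slope s = -l):
   maximising it over conv(C) means corresponding to slope -l. *)
Definition lagr (l : R) (c : T) := xi c + l * rho c.

(* c is a lagr-maximiser in C and, among the maximisers, maximises e * rho:
   e = 1 selects the receiver-best, e = -1 the receiver-worst endpoint of the
   face of conv(C) corresponding to slope -l. *)
Definition lex_top (l e : R) (C : {set T}) (c : T) :=
  [&& c \in C, [forall d in C, lagr l d <= lagr l c] &
      [forall d in C, (lagr l d == lagr l c) ==> (e * rho d <= e * rho c)]].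

Definition select (l e : R) (C : {set T}) : T := odflt t0 [pick c | lex_top l e C c].

Lemma select_spec (l e : R) (C : {set T}) (x : T) : x \in C -> lex_top l e C (select l e C).
Proof.
move=> xC; have [c1 [c1C c1max]] := exists_argmax (lagr l) xC.
pose ties d := (d \in C) && (lagr l d == lagr l c1).
have c1tie : ties c1 by rewrite /ties eqxx andbT; exact: c1C.
have [c2 [/andP[c2C /eqP c2c1] c2max]] := exists_argmax (fun d => e * rho d) c1tie.
have top_c2 : lex_top l e C c2.
  apply/and3P; split=> //; apply/forall_inP => d dC; first by rewrite c2c1 c1max.
  by apply/implyP => /eqP dc2; apply: c2max; rewrite /ties dC dc2 c2c1 eqxx.
by rewrite /select; case: pickP => [c //|/(_ c2)]; rewrite top_c2.
Qed.
Arguments select_spec l e {C x}.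

Section Selection.
Variables (l e : R) (C : {set T}) (x : T).
Hypothesis xC : x \in C.

Lemma select_in : select l e C \in C.
Proof. by case/and3P: (select_spec l e xC). Qed.

Lemma select_max d : d \in C -> lagr l d <= lagr l (select l e C).
Proof. by case/and3P: (select_spec l e xC) => _ /forall_inP max _; exact: max. Qed.

Lemma select_tie d : d \in C -> lagr l d = lagr l (select l e C) ->
  e * rho d <= e * rho (select l e C).
Proof.
case/and3P: (select_spec l e xC) => _ _ /forall_inP tie dC dtie.
by have := tie d dC; rewrite dtie eqxx.
Qed.

End Selection.
Arguments select_in l e {C x}.
Arguments select_max l e {C x}.
Arguments select_tie l e {C x}.

Definition hi (l : R) (C : {set T}) := select l 1 C.
Definition lo (l : R) (C : {set T}) := select l (-1) C.

Lemma hi_max (l : R) (C : {set T}) d : d \in C -> lagr l d <= lagr l (hi l C).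
Proof. by move=> dC; exact: (select_max l 1 dC d dC). Qed.
Arguments hi_max l {C d}.

Lemma hi_tie (l : R) (C : {set T}) d : d \in C ->
  lagr l d = lagr l (hi l C) -> rho d <= rho (hi l C).
Proof. by move=> dC /(select_tie l 1 dC d dC); rewrite !mul1r. Qed.
Arguments hi_tie {l C d}.

Lemma lo_tie (l : R) (C : {set T}) d : d \in C ->
  lagr l d = lagr l (lo l C) -> rho (lo l C) <= rho d.
Proof. by move=> dC /(select_tie l (-1) dC d dC); rewrite !mulN1r lerN2. Qed.
Arguments lo_tie {l C d}.

Lemma lagr_lo_hi (l : R) (C : {set T}) x : x \in C -> lagr l (lo l C) = lagr l (hi l C).
Proof.
move=> xC; apply/eqP; rewrite eq_le.
by rewrite (select_max l (-1) xC _ (select_in l 1 xC)) (select_max l 1 xC _ (select_in l (-1) xC)).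
Qed.
Arguments lagr_lo_hi l {C x}.

Definition Hi (l : R) := \sum_th q th * rho (hi l (firstk k th)).
Definition Lo (l : R) := \sum_th q th * rho (lo l (firstk k th)).

(* The multiplier at which the Lagrangians of p.1 and p.2 coincide. *)
Definition breakpoint (p : T * T) := (xi p.1 - xi p.2) / (rho p.2 - rho p.1).

Lemma lagr_le_breakpoint (l : R) c d : rho c < rho d ->
  (lagr l d <= lagr l c) = (l <= breakpoint (c, d)).
Proof.
rewrite -subr_gt0 => dc_gt0; rewrite /breakpoint /= ler_pdivlMr // /lagr.
by apply/idP/idP; lra.
Qed.
Arguments lagr_le_breakpoint l {c d}.

Lemma lagr_lt_breakpoint (l : R) c d : rho c < rho d ->
  (lagr l d < lagr l c) = (l < breakpoint (c, d)).
Proof.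
rewrite -subr_gt0 => dc_gt0; rewrite /breakpoint /= ltr_pdivlMr // /lagr.
by apply/idP/idP; lra.
Qed.
Arguments lagr_lt_breakpoint l {c d}.

Definition lambda_top := 1 + \sum_p `|breakpoint p|.

Lemma breakpoint_lt_top p : breakpoint p < lambda_top.
Proof.
rewrite /lambda_top (bigD1 p) //=.
have : 0 <= \sum_(p' | p' != p) `|breakpoint p'| by apply: sumr_ge0 => *.
have := ler_norm (breakpoint p); lra.
Qed.

Definition candidate (o : option (T * T)) : R :=
  if o is Some p then Num.max 0 (breakpoint p) else lambda_top.

Lemma candidate_ge0 o : 0 <= candidate o.
Proof.
case: o => [p|] /=; first by rewrite le_max lexx.
by have := breakpoint_lt_top (t0, t0); rewrite /breakpoint !subrr mul0r; exact: ltW.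
Qed.

Lemma hi_top_rho_max (C : {set T}) d : d \in C -> rho d <= rho (hi lambda_top C).
Proof.
move=> dC; rewrite leNgt; apply/negP => hd.
have := hi_max lambda_top dC.
by rewrite (lagr_le_breakpoint _ hd) leNgt breakpoint_lt_top.
Qed.

Lemma E_rho_le_Hi_top : E_rho <= Hi lambda_top.
Proof.
apply: ler_sum => th _; apply: ler_wpM2l; first exact: q_ge0.
exact: hi_top_rho_max (firstk_rec th sig0).
Qed.

Lemma hi_still_max (l0 l1 : R) (C : {set T}) : 0 <= l0 -> l0 < l1 ->
  (forall o, ~~ (l0 < candidate o < l1)) ->
  forall d, d \in C -> lagr l1 d <= lagr l1 (hi l0 C).
Proof.
move=> l0_ge0 l01 gap d dC; set c := hi l0 C.
have c_max := hi_max l0 dC.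
have [dc|cd] := leP (rho d) (rho c).
  have : (l1 - l0) * rho d <= (l1 - l0) * rho c.
    by apply: ler_wpM2l => //; rewrite subr_ge0 ltW.
  by move: c_max; rewrite /lagr; lra.
have : lagr l0 d < lagr l0 c.
  rewrite lt_neqAle c_max andbT; apply/negP => /eqP tie.
  by have := hi_tie dC tie; rewrite leNgt cd.
rewrite (lagr_lt_breakpoint _ cd) (lagr_le_breakpoint _ cd) => l0_lt.
have := gap (Some (c, d)); rewrite /= max_r; last exact: ltW (le_lt_trans l0_ge0 l0_lt).
by rewrite l0_lt /= -leNgt.
Qed.
Arguments hi_still_max {l0 l1 C}.

Lemma Lo_le_Hi_gap (l0 l1 : R) : 0 <= l0 -> l0 < l1 ->
  (forall o, ~~ (l0 < candidate o < l1)) -> Lo l1 <= Hi l0.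
Proof.
move=> l0_ge0 l01 gap; apply: ler_sum => th _; apply: ler_wpM2l; first exact: q_ge0.
set C := firstk k th; have xC : th act0 \in C by exact: firstk_rec.
apply: (lo_tie (select_in l0 1 xC)); apply/eqP; rewrite eq_le.
rewrite (select_max l1 (-1) xC _ (select_in l0 1 xC)).
by rewrite (hi_still_max l0_ge0 l01 gap _ (select_in l1 (-1) xC)).
Qed.
Arguments Lo_le_Hi_gap {l0 l1}.

Definition receiver_value (l t : R) := (1 - t) * Lo l + t * Hi l.

Lemma exists_multiplier : exists l t, [/\ 0 <= l, 0 <= t, t <= 1,
  E_rho <= receiver_value l t & l * (receiver_value l t - E_rho) = 0].
Proof.
have [o [E_le_Hi o_min]] :=
  exists_argmin (P := fun o => E_rho <= Hi (candidate o)) (x0 := None) candidate E_rho_le_Hi_top.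
set l := candidate o in E_le_Hi o_min *.
have l_ge0 : 0 <= l by exact: candidate_ge0.
have [l0|l_neq0] := eqVneq l 0.
  exists l, 1; split=> //; last by rewrite l0 mul0r.
  by rewrite /receiver_value subrr mul0r add0r mul1r.
have below : candidate (Some (t0, t0)) < l.
  by rewrite /= /breakpoint !subrr mul0r maxxx lt_neqAle eq_sym l_neq0.
have [o' [o'_lt o'_max]] :=
  exists_argmax (P := fun o => candidate o < l) (x0 := Some (t0, t0)) candidate below.
set l0 := candidate o' in o'_lt o'_max.
have gap o'' : ~~ (l0 < candidate o'' < l).
  by apply/negP => /andP[lo hi]; have := o'_max o'' hi; rewrite leNgt lo.
have Hi_lt : Hi l0 < E_rho.
  by rewrite ltNge; apply/negP => /o_min; rewrite leNgt o'_lt.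
have Lo_le : Lo l <= Hi l0 := Lo_le_Hi_gap (candidate_ge0 o') o'_lt gap.
have [t [t_ge0 t_le1 tE]] :=
  convex_interpolation (ltW (le_lt_trans Lo_le Hi_lt)) E_le_Hi.
by exists l, t; rewrite /receiver_value tE subrr mulr0 lexx.
Qed.

Definition sig_of (th : state) (c : T) : 'I_k := odflt sig0 [pick i | th (rec i) == c].

Lemma sig_ofK (th : state) c : c \in firstk k th -> th (rec (sig_of th c)) = c.
Proof.
case/firstk_recP => i thi; rewrite /sig_of; case: pickP => [j /eqP //|/(_ i)].
by rewrite thi eqxx.
Qed.

Lemma sig_of_eq (th : state) c sg : 0 < q th -> c \in firstk k th ->
  (sg == sig_of th c) = (th (rec sg) == c).
Proof.
move=> q_pos cC; have th_inj : injective th := q_distinct th q_pos.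
apply/eqP/eqP => [->|thc]; first exact: sig_ofK.
by apply: rec_inj; apply: th_inj; rewrite thc sig_ofK.
Qed.

Section Scheme.
Variables (l t : R).
Hypotheses (t_ge0 : 0 <= t) (t_le1 : t <= 1).

Definition mixture (f : T -> R) (C : {set T}) := (1 - t) * f (lo l C) + t * f (hi l C).

Definition mix_point (C : {set T}) : R * R := (mixture rho C, mixture xi C).

Definition scheme (th : state) : 'I_k -> R :=
  two_point t (sig_of th (lo l (firstk k th))) (sig_of th (hi l (firstk k th))).

Lemma scheme_ge0 th sg : 0 <= scheme th sg.
Proof. exact: two_point_ge0. Qed.

Lemma scheme_rec (th : state) (f : T -> R) :
  \sum_sg scheme th sg * f (th (rec sg)) = mixture f (firstk k th).
Proof.
have xC := firstk_rec th sig0.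
rewrite sum_two_point !sig_ofK //.
  exact: (select_in l 1 xC).
exact: (select_in l (-1) xC).
Qed.

Lemma scheme_is_scheme : is_scheme scheme.
Proof.
move=> th; split=> [sg|]; first exact: scheme_ge0.
by rewrite -(eq_bigr _ (fun sg _ => mulr1 (scheme th sg))) sum_two_point; ring.
Qed.

Lemma sum_mixture_rho : \sum_th q th * mixture rho (firstk k th) = receiver_value l t.
Proof.
rewrite /receiver_value /Lo /Hi !big_distrr -big_split /=.
by apply: eq_bigr => th _; rewrite /mixture; ring.
Qed.

Lemma rec_points_scheme (C : {set T}) : 0 < qC k q C ->
  rec_points rho xi q scheme rec C = mix_point C.
Proof.
move=> qC_pos; rewrite /rec_points.
have fibre (f : T -> R) :
    \sum_(th | firstk k th == C) \sum_sg q th * scheme th sg * f (th (rec sg))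
    = qC k q C * mixture f C.
  rewrite /qC big_distrl /=; apply: eq_bigr => th /eqP <-.
  by rewrite -scheme_rec big_distrr /=; apply: eq_bigr => sg _; rewrite mulrA.
by rewrite !fibre ![qC k q C * _ / _]mulrC !mulKf // gt_eqF.
Qed.

Lemma mix_point_conv (C : {set T}) x : x \in C -> in_conv rho xi C (mix_point C).
Proof.
move=> xC; have loC := select_in l (-1) xC; have hiC := select_in l 1 xC.
exists (two_point t (lo l C) (hi l C)); split; first by move=> c; exact: two_point_ge0.
split.
  move=> c cC; rewrite /two_point.
  have /negbTE -> : c != lo l C by apply: contraNneq cC => ->.
  have /negbTE -> : c != hi l C by apply: contraNneq cC => ->.
  by rewrite !mulr0 addr0.
split; last by rewrite !sum_two_point.
by rewrite -(eq_bigr _ (fun c _ => mulr1 _)) sum_two_point; ring.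
Qed.

Lemma mix_point_lagr (C : {set T}) x : x \in C ->
  (mix_point C).2 + l * (mix_point C).1 = lagr l (hi l C).
Proof.
move=> xC; have := lagr_lo_hi l xC; rewrite /mix_point /mixture /lagr /= => tie.
have -> : (1 - t) * xi (lo l C) + t * xi (hi l C) + l * ((1 - t) * rho (lo l C) + t * rho (hi l C))
  = (1 - t) * (xi (lo l C) + l * rho (lo l C)) + t * (xi (hi l C) + l * rho (hi l C)) by ring.
by rewrite tie; ring.
Qed.

Lemma conv_lagr_le (C : {set T}) x z : x \in C -> in_conv rho xi C z ->
  z.2 + l * z.1 <= (mix_point C).2 + l * (mix_point C).1.
Proof.
move=> xC [lam [lam_ge0 [lam_out [lam_sum ->]]]] /=; rewrite (mix_point_lagr _ _ xC).
have -> : \sum_c lam c * xi c + l * \sum_c lam c * rho c = \sum_c lam c * lagr l c.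
  by rewrite big_distrr -big_split; apply: eq_bigr => c _ /=; rewrite /lagr; ring.
rewrite -[X in _ <= X]mul1r -lam_sum big_distrl /=.
apply: ler_sum => c _; have [cC|cC] := boolP (c \in C); last by rewrite lam_out // !mul0r.
by apply: ler_wpM2l => //; exact: hi_max.
Qed.

End Scheme.
Arguments scheme_ge0 l {t}.
Arguments scheme_is_scheme l {t}.
Arguments mix_point_conv l {t} t_ge0 t_le1 {C x}.
Arguments mix_point_lagr l t {C x}.
Arguments conv_lagr_le l t {C x z}.

Section Persuasiveness.
Variables (l t : R).
Hypotheses (t_ge0 : 0 <= t) (t_le1 : t <= 1).
Local Notation phi := (scheme l t).

Lemma scheme_by_type (th : state) sg : 0 < q th ->
  phi th sg = two_point t (lo l (firstk k th)) (hi l (firstk k th)) (th (rec sg)).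
Proof.
move=> q_pos; have xC := firstk_rec th sig0.
rewrite /scheme /two_point !sig_of_eq //.
  exact: (select_in l 1 xC).
exact: (select_in l (-1) xC).
Qed.

Lemma scheme_relabel (a b : 'I_k) (th : state) sg : 0 < q th ->
  phi (relabel (tperm (rec a) (rec b)) th) sg = phi th (tperm a b sg).
Proof.
move=> q_pos; have q_pos' : 0 < q (relabel (tperm (rec a) (rec b)) th) by rewrite q_relabel.
rewrite !scheme_by_type // firstk_relabel; last first.
  by move=> i; case: tpermP => [->|->|] //=; rewrite !ltn_ord.
by rewrite ffunE -inj_tperm //; exact: rec_inj.
Qed.

Definition mass (sg : 'I_k) (j : 'I_n) := \sum_th q th * phi th sg * rho (th j).

Lemma mass_tperm (a b sg : 'I_k) j :
  mass sg j = mass (tperm a b sg) (tperm (rec a) (rec b) j).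
Proof.
rewrite /mass (sum_relabel (tperm (rec a) (rec b))); apply: eq_bigr => th _.
rewrite q_relabel ffunE; have [->|q_pos] := q_pos_or0 th; first by rewrite !mul0r.
by rewrite scheme_relabel.
Qed.

Lemma mass_diag (sg sg' : 'I_k) : mass sg (rec sg) = mass sg' (rec sg').
Proof. by rewrite (mass_tperm sg sg') !tpermL. Qed.

Lemma mass_offdiag (sg sg' : 'I_k) j : j != rec sg -> j != rec sg' -> mass sg j = mass sg' j.
Proof. by move=> j_sg j_sg'; rewrite (mass_tperm sg sg') tpermL tpermD // eq_sym. Qed.

Lemma sum_mass j : \sum_sg mass sg j = E_rho.
Proof.
rewrite -(E_rho_any j) /mass exchange_big /=; apply: eq_bigr => th _.
under eq_bigr do rewrite mulrAC.
by rewrite -big_distrr /= (proj2 (scheme_is_scheme l t_ge0 t_le1 th)) mulr1.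
Qed.

Lemma sum_mass_diag : \sum_sg mass sg (rec sg) = receiver_value l t.
Proof.
rewrite -(sum_mixture_rho l t) /mass exchange_big /=; apply: eq_bigr => th _.
rewrite -(scheme_rec l t th rho) big_distrr /=.
by apply: eq_bigr => sg _; rewrite mulrA.
Qed.

Lemma mass_le_diag sg j : E_rho <= receiver_value l t -> mass sg j <= mass sg (rec sg).
Proof.
move=> E_le; set A := mass sg (rec sg).
have kA : E_rho <= A *+ k.
  rewrite (le_trans E_le) // -sum_mass_diag (eq_bigr (fun _ => A)) ?sumr_const ?card_ord //.
  by move=> sg' _; rewrite (mass_diag sg' sg).
have k1_gt0 : (0 < k.-1)%N by rewrite -ltnS prednK // k_gt0.
have [j_lt|j_ge] := ltnP j k; last first.
  have off sg' : mass sg' j = mass sg j.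
    by apply: mass_offdiag; apply: contraTneq j_ge => ->; rewrite -ltnNge /= ltn_ord.
  move: kA; rewrite -(sum_mass j) (eq_bigr _ (fun sg' _ => off sg')) sumr_const card_ord.
  by rewrite lerMn2r gtn_eqF ?k_gt0.
pose j' := Ordinal j_lt; have -> : j = rec j' by apply: val_inj.
have [-> //|j'_sg] := eqVneq j' sg.
have off sg' : sg' != j' -> mass sg' (rec j') = mass sg (rec j').
  by move=> sg'_j'; apply: mass_offdiag; rewrite (inj_eq rec_inj) // eq_sym.
move: kA; rewrite -(sum_mass (rec j')) (bigD1 j') //= (eq_bigr _ off) sumr_const.
rewrite cardC1 card_ord (mass_diag j' sg) -/A -(prednK k_gt0) mulrS lerD2l lerMn2r.
by rewrite gtn_eqF.
Qed.

Lemma scheme_persuasive : E_rho <= receiver_value l t -> persuasive rho q phi rec.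
Proof.
move=> E_le sg Psig_pos j; rewrite /condE.
by apply: ler_wpM2r; [rewrite invr_ge0 ltW | exact: mass_le_diag].
Qed.

End Persuasiveness.

(* Psig * condE recovers the unnormalised sum, also for signals of probability 0. *)
Lemma Psig_condE (ph : state -> 'I_k -> R) sg (f : state -> R) :
  (forall th, 0 <= ph th sg) -> Psig q ph sg * condE q ph sg f = \sum_th q th * ph th sg * f th.
Proof.
move=> ph_ge0; rewrite /condE; have [P0|P_neq0] := eqVneq (Psig q ph sg) 0; last first.
  by rewrite mulrC divfK.
have mass_ge0 th : 0 <= q th * ph th sg by rewrite mulr_ge0 ?q_ge0.
rewrite P0 mul0r; symmetry; apply: big1 => th _.
by rewrite (@psumr_eq0P R _ predT _ (fun th _ => mass_ge0 th) P0 th isT) mul0r.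
Qed.

Definition value (ph : state -> 'I_k -> R) (a : 'I_k -> 'I_n) (f : T -> R) :=
  \sum_sg \sum_th q th * ph th sg * f (th (a sg)).

Lemma uS_scheme_value (ph : state -> 'I_k -> R) (a : 'I_k -> 'I_n) :
  is_scheme ph -> uS_scheme xi q ph a = value ph a xi.
Proof.
move=> ph_scheme; apply: eq_bigr => sg _; apply: Psig_condE => th.
by case: (ph_scheme th) => ph_ge0 _; exact: ph_ge0.
Qed.

Lemma receiver_best_exists (ph : state -> 'I_k -> R) : exists a, receiver_best rho xi q ph a.
Proof.
pose cr sg (j : 'I_n) := condE q ph sg (fun th => rho (th j)).
pose cx sg (j : 'I_n) := condE q ph sg (fun th => xi (th j)).
pose best sg c := [forall d, cr sg d <= cr sg c] &&
   [forall d, [forall e, cr sg e <= cr sg d] ==> (cx sg d <= cx sg c)].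
have best_ex sg : exists c, best sg c.
  have [c1 [_ c1max]] := exists_argmax (P := predT) (x0 := act0) (cr sg) isT.
  have [c2 [/eqP c2c1 c2max]] :=
    exists_argmax (P := fun d => cr sg d == cr sg c1) (x0 := c1) (cx sg) (eqxx _).
  exists c2; apply/andP; split; apply/forallP => d; first by rewrite c2c1 c1max.
  apply/implyP => /forallP d_best; apply: c2max.
  by rewrite eq_le c1max //= -c2c1 d_best.
exists (fun sg => odflt act0 [pick c | best sg c]) => sg.
have : best sg (odflt act0 [pick c | best sg c]).
  by case: pickP => [c //|none]; have [c best_c] := best_ex sg; have := none c; rewrite best_c.
case/andP=> /forallP c_best /forallP c_tie; split=> [j|j j_best]; first exact: c_best.
by have := c_tie j; rewrite (_ : [forall e, _] = true) //; apply/forallP.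
Qed.

(* A best-responding receiver gets at least rho_E, by ignoring the signal. *)
Lemma best_response_ge_E (ph : state -> 'I_k -> R) (a : 'I_k -> 'I_n) :
  is_scheme ph -> receiver_best rho xi q ph a -> E_rho <= value ph a rho.
Proof.
move=> ph_scheme a_best.
have ph_ge0 sg th : 0 <= ph th sg by case: (ph_scheme th) => H _; exact: H.
have -> : E_rho = \sum_sg \sum_th q th * ph th sg * rho (th act0).
  rewrite exchange_big /E_rho; apply: eq_bigr => th _.
  rewrite -[LHS]mulr1 -(proj2 (ph_scheme th)) !big_distrr; apply: eq_bigr => sg _ /=; ring.
apply: ler_sum => sg _; rewrite -!Psig_condE //; apply: ler_wpM2l; last exact: (a_best sg).1.
by apply: sumr_ge0 => th _; rewrite mulr_ge0 ?q_ge0.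
Qed.

Section Duality.
Variables (l t : R).
Hypotheses (l_ge0 : 0 <= l) (t_ge0 : 0 <= t) (t_le1 : t <= 1).
Hypothesis E_le : E_rho <= receiver_value l t.
Hypothesis slackness : l * (receiver_value l t - E_rho) = 0.
Local Notation phi := (scheme l t).

Definition sender_value := \sum_th q th * mixture l t xi (firstk k th).

Definition dual_value := \sum_th q th * lagr l (hi l (firstk k th)).

(* By complementary slackness the scheme attains the dual bound. *)
Lemma dual_value_slack : dual_value - l * E_rho = sender_value.
Proof.
have -> : dual_value = sender_value + l * \sum_th q th * mixture l t rho (firstk k th).
  rewrite big_distrr -big_split /=; apply: eq_bigr => th _.
  rewrite -(mix_point_lagr l t (firstk_rec th sig0)) /=; ring.
by rewrite sum_mixture_rho; move: slackness; lra.
Qed.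

(* Weak duality: for any scheme and any choice of actions, the Lagrangian
   value is at most the dual bound.  The chosen actions span at most k
   positions, which symmetry moves into the first k. *)
Lemma value_lagr_le (ph : state -> 'I_k -> R) (a : 'I_k -> 'I_n) :
  is_scheme ph -> value ph a xi + l * value ph a rho <= dual_value.
Proof.
move=> ph_scheme.
have ph_ge0 th sg : 0 <= ph th sg by case: (ph_scheme th) => H _; exact: H.
have [p p_prefix] := @perm_into_prefix n k [set a sg | sg in 'I_k]
  (leq_trans (leq_imset_card _ _) (eq_leq (card_ord k))).
have state_bound th : \sum_sg ph th sg * lagr l (th (a sg))
    <= lagr l (hi l (firstk k (relabel p^-1 th))).
  rewrite -[X in _ <= X]mul1r -(proj2 (ph_scheme th)) big_distrl /=.
  apply: ler_sum => sg _; apply: ler_wpM2l => //.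
  have a_in : th (a sg) \in firstk k (relabel p^-1 th).
    apply/imsetP; exists (p (a sg)); last by rewrite ffunE permK.
    by rewrite inE p_prefix ?imset_f.
  exact: hi_max.
have -> : value ph a xi + l * value ph a rho
    = \sum_th q th * \sum_sg ph th sg * lagr l (th (a sg)).
  symmetry; under eq_bigr do rewrite big_distrr /=.
  rewrite exchange_big /= big_distrr -big_split /=; apply: eq_bigr => sg _.
  rewrite big_distrr -big_split /=; apply: eq_bigr => th _; rewrite /lagr; ring.
rewrite /dual_value (sum_relabel p^-1 (fun th => q th * lagr l (hi l (firstk k th)))).
apply: ler_sum => th _; rewrite q_relabel.
by apply: ler_wpM2l; [exact: q_ge0 | exact: state_bound].
Qed.

Lemma scheme_upper (ph : state -> 'I_k -> R) (a : 'I_k -> 'I_n) :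
  is_scheme ph -> receiver_best rho xi q ph a -> uS_scheme xi q ph a <= sender_value.
Proof.
move=> ph_scheme a_best; rewrite uS_scheme_value // -dual_value_slack.
have := value_lagr_le ph a ph_scheme.
have : l * E_rho <= l * value ph a rho by rewrite ler_wpM2l // best_response_ge_E.
lra.
Qed.

(* Under the scheme, the receiver follows the recommendation (persuasiveness),
   breaking ties in the sender's favour, so the sender gets at least sender_value. *)
Lemma scheme_lower (a : 'I_k -> 'I_n) :
  receiver_best rho xi q phi a -> sender_value <= uS_scheme xi q phi a.
Proof.
move=> a_best; have phi_ge0 := scheme_ge0 l t_ge0 t_le1.
have -> : sender_value = \sum_sg \sum_th q th * phi th sg * xi (th (rec sg)).
  rewrite exchange_big; apply: eq_bigr => th _ /=.
  rewrite -(scheme_rec l t th xi) big_distrr /=.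
  by apply: eq_bigr => sg _; rewrite mulrA.
apply: ler_sum => sg _; rewrite -Psig_condE //.
have Psig_ge0 : 0 <= Psig q phi sg by apply: sumr_ge0 => th _; rewrite mulr_ge0 ?q_ge0.
rewrite le_eqVlt in Psig_ge0; case/orP: Psig_ge0 => [/eqP <-|Psig_pos]; first by rewrite !mul0r.
apply: ler_wpM2l; first exact: ltW.
by apply: (a_best sg).2; exact: scheme_persuasive.
Qed.

Lemma scheme_optimal : optimal_scheme rho xi q phi.
Proof.
split; first exact: scheme_is_scheme.
have [a a_best] := receiver_best_exists phi; exists a; split=> // ph' a' ph'_scheme a'_best.
exact: le_trans (scheme_upper _ _ ph'_scheme a'_best) (scheme_lower _ a_best).
Qed.

Lemma uS_rec_points : uS_pc k q (rec_points rho xi q phi rec) = sender_value.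
Proof.
rewrite /uS_pc /sender_value -(sum_by_firstk (mixture l t xi)).
by apply: eq_bigr => C C_pos; rewrite rec_points_scheme.
Qed.

Lemma uR_rec_points : uR_pc k q (rec_points rho xi q phi rec) = receiver_value l t.
Proof.
rewrite /uR_pc -sum_mixture_rho -(sum_by_firstk (mixture l t rho)).
by apply: eq_bigr => C C_pos; rewrite rec_points_scheme.
Qed.

Lemma rec_points_pareto : s_pareto k rho xi q (Some (- l)) (rec_points rho xi q phi rec).
Proof.
have pt C : 0 < qC k q C -> exists2 x, x \in C & rec_points rho xi q phi rec C = mix_point l t C.
  move=> C_pos; have [th eC] := qC_pos_firstk C_pos.
  exists (th act0); first by rewrite -eC firstk_rec.
  exact: rec_points_scheme.
split; first by move=> C /pt [x xC ->]; exact: (mix_point_conv l t_ge0 t_le1 xC).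
split; last by move=> i; rewrite E_rho_any uR_rec_points.
move=> C /pt [x xC ->]; split; first exact: (mix_point_conv l t_ge0 t_le1 xC).
by move=> z z_in /=; rewrite !mulNr !opprK; exact: (conv_lagr_le l t xC z_in).
Qed.

Lemma pareto_le_rec_points (s' : option R) (P' : {set T} -> R * R) :
  s_pareto k rho xi q s' P' -> uS_pc k q P' <= uS_pc k q (rec_points rho xi q phi rec).
Proof.
move=> [P'_conv [_ P'_ge_E]]; rewrite uS_rec_points -dual_value_slack.
have lagr_le : uS_pc k q P' + l * uR_pc k q P' <= dual_value.
  rewrite /uS_pc /uR_pc big_distrr -big_split /= /dual_value.
  rewrite -(sum_by_firstk (fun C => lagr l (hi l C))).
  apply: ler_sum => C C_pos; have [th eC] := qC_pos_firstk C_pos.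
  have xC : th act0 \in C by rewrite -eC; exact: firstk_rec.
  rewrite -(mix_point_lagr l t xC) mulrCA -mulrDr.
  by apply: ler_wpM2l; [exact: qC_ge0 | exact: (conv_lagr_le l t xC (P'_conv C C_pos))].
have : l * E_rho <= l * uR_pc k q P' by rewrite ler_wpM2l // -(E_rho_any act0).
lra.
Qed.

End Duality.

Lemma main_result :
  exists s : option R, slope_ok s /\
  exists (phi : state -> 'I_k -> R) (rec : 'I_k -> 'I_n),
    optimal_scheme rho xi q phi /\
    (forall sg, (rec sg < k)%N) /\
    persuasive rho q phi rec /\
    s_pareto k rho xi q s (rec_points rho xi q phi rec) /\
    (forall (s' : option R) (P' : {set T} -> R * R),
       slope_ok s' -> s_pareto k rho xi q s' P' ->
       uS_pc k q P' <= uS_pc k q (rec_points rho xi q phi rec)).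
Proof.
have [l [t [l_ge0 t_ge0 t_le1 E_le slackness]]] := exists_multiplier.
exists (Some (- l)); split; first by rewrite /= oppr_le0.
exists (scheme l t), rec; split; first exact: scheme_optimal.
split; first by move=> sg; rewrite /= ltn_ord.
split; first exact: scheme_persuasive.
split; first exact: rec_points_pareto.
by move=> s' P' _; exact: pareto_le_rec_points.
Qed.

End SymmetricInstance.

Theorem theorem3p1 (R : realType) (T : finType) (n k : nat) (rho xi : T -> R)
  (q : {ffun 'I_n -> T} -> R) :
  (2 <= k)%N -> (k <= n)%N ->
  is_distribution q -> symmetric_q q -> distinct_types q ->
  exists s : option R, slope_ok s /\
  exists (phi : {ffun 'I_n -> T} -> 'I_k -> R) (rec : 'I_k -> 'I_n),
    optimal_scheme rho xi q phi /\
    (forall sg, (rec sg < k)%N) /\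
    persuasive rho q phi rec /\
    s_pareto k rho xi q s (rec_points rho xi q phi rec) /\
    (forall (s' : option R) (P' : {set T} -> R * R),
       slope_ok s' -> s_pareto k rho xi q s' P' ->
       uS_pc k q P' <= uS_pc k q (rec_points rho xi q phi rec)).
Proof.
move=> k_ge2 k_le_n q_distr q_sym q_distinct.
(* A type exists, since the state space carries a probability distribution. *)
have [th0 _] : exists th : {ffun 'I_n -> T}, true.
  case: (pickP (@predT {ffun 'I_n -> T})) => [th _|none]; first by exists th.
  by case: q_distr => _; rewrite big_pred0 // => /eqP; rewrite eq_sym oner_eq0.
have n_gt0 : (0 < n)%N by apply: leq_trans k_le_n; exact: leq_trans k_ge2.
exact: main_result k_ge2 k_le_n q_distr q_sym q_distinct (th0 (Ordinal n_gt0)).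
Qed.
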